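(* Let $\emptyset\neq S\subseteq\mathbb{S}$. The following assertions are equivalent: (i) $S$ is s-convex; (ii) for all $x_1,x_2\in\mathbb{P}S$ one has $x_1+x_2\in\mathbb{P}S$; (iii) $\mathbb{P}S$ is convex; (iv) $\mathbb{R}_+S$ is a pointed convex cone; (v) there exists a pointed convex cone $K\subseteq\mathbb{R}^n$ such that $S=K\cap\mathbb{S}$; (vi) there exists a convex set $C\subseteq\mathbb{R}^n$ such that $S=\rho(C)$; (vii) there exists a bounded convex set $C\subseteq\mathbb{R}^n$ such that $S=\rho(C)$; (viii) $S=\rho(\operatorname{conv}S)$. If, moreover, $\Phi$ is convex, then (i) is also equivalent to: (ix) $(0,1]\,S$ is convex.
   Context: Standing setting: $n\ge 2$; $\mathbb{R}^n$ carries the usual inner product $\langle\cdot,\cdot\rangle$ and Euclidean norm; $o$ denotes the zero vector. $\Phi:\mathbb{R}^n\to\mathbb{R}_+:=[0,\infty)$ is a continuous function with $\Phi(tx)=t\Phi(x)$ for all $x\in\mathbb{R}^n$, $t\ge 0$, and $\Phi(x)=0$ iff $x=o$. Set $\mathbb{S}:=\{x\in\mathbb{R}^n\mid \Phi(x)=1\}$ (with the topology induced from $\mathbb{R}^n$), $\mathbb{P}:=(0,\infty)$, and $\rho:\mathbb{R}^n\to\{o\}\cup\mathbb{S}$, $\rho(x):=x/\Phi(x)$ for $x\neq o$, $\rho(o):=o$. For $\emptyset\ne\Gamma\subseteq\mathbb{R}$ and $\emptyset\ne A\subseteq\mathbb{R}^n$, $\Gamma A:=\{\gamma a\mid \gamma\in\Gamma,\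 a\in A\}$. For $x,y\in\mathbb{S}$ and $\lambda\in[0,1]$, $\lambda x+_s(1-\lambda)y:=\rho(\lambda x+(1-\lambda)y)$. A nonempty set $S\subseteq\mathbb{S}$ is called s-convex if $\lambda x+_s(1-\lambda)y\in S$ for all $x,y\in S$ and $\lambda\in[0,1]$. A cone $K\subseteq\mathbb{R}^n$ is pointed if $K\cap(-K)=\{o\}$. $\operatorname{conv}$ denotes the convex hull. *)

From HB Require Import structures.
From mathcomp Require Import all_boot all_order all_algebra.
From mathcomp Require Import all_classical all_reals all_analysis.
Set Implicit Arguments. Unset Strict Implicit. Unset Printing Implicit Defensive.
Import Order.TTheory GRing.Theory Num.Theory.
Import numFieldNormedType.Exports.
Local Open Scope classical_set_scope.
Local Open Scope ring_scope.

Section Defs.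
Variables (R : realType) (n : nat).
Implicit Types (A C K S : set 'rV[R]_n) (Phi : 'rV[R]_n -> R).

Definition enorm (x : 'rV[R]_n) : R := Num.sqrt (\sum_(i < n) x ord0 i ^+ 2).

Definition gauge_like Phi : Prop :=
  [/\ continuous Phi,
      (forall x, 0 <= Phi x),
      (forall x (t : R), 0 <= t -> Phi (t *: x) = t * Phi x)
    & (forall x, Phi x = 0 <-> x = 0)].

Definition Sph Phi : set 'rV[R]_n := [set x | Phi x = 1].

Definition rho Phi (x : 'rV[R]_n) : 'rV[R]_n :=
  if x == 0 then 0 else (Phi x)^-1 *: x.

Definition scaleset (G : set R) A : set 'rV[R]_n :=
  [set z | exists g, G g /\ exists a, A a /\ z = g *: a].

Definition Pset : set R := [set t | 0 < t].
Definition Rplus : set R := [set t | 0 <= t].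
Definition I01 : set R := [set t | 0 < t <= 1].

Definition sadd Phi (l : R) (x y : 'rV[R]_n) : 'rV[R]_n :=
  rho Phi (l *: x + (1 - l) *: y).

Definition s_convex Phi S : Prop :=
  S !=set0 /\
  forall x y l, S x -> S y -> 0 <= l <= 1 -> S (sadd Phi l x y).

Definition cvx_set A : Prop :=
  forall x y (l : R), A x -> A y -> 0 <= l <= 1 -> A (l *: x + (1 - l) *: y).

Definition bnd_set A : Prop := exists M : R, forall x, A x -> enorm x <= M.

Definition is_cone_set K : Prop := forall x (t : R), K x -> 0 <= t -> K (t *: x).

Definition pointed K : Prop := forall x, (K x /\ K (- x)) <-> x = 0.

Definition pointed_convex_cone K : Prop :=
  [/\ is_cone_set K, cvx_set K & pointed K].

Definition cvx_hull A : set 'rV[R]_n :=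
  [set x | forall C, cvx_set C -> A `<=` C -> C x].

Definition cvx_fun Phi : Prop :=
  forall x y (l : R), 0 <= l <= 1 ->
    Phi (l *: x + (1 - l) *: y) <= l * Phi x + (1 - l) * Phi y.

End Defs.

Arguments Pset {R}.
Arguments Rplus {R}.
Arguments I01 {R}.

From HB Require Import structures.
From mathcomp Require Import all_boot all_order all_algebra.
From mathcomp Require Import all_classical all_reals all_analysis.
From mathcomp Require Import ring lra.
Import Order.TTheory GRing.Theory Num.Theory.
Import numFieldNormedType.Exports.
Set Implicit Arguments. Unset Strict Implicit.
Local Open Scope classical_set_scope.
Local Open Scope ring_scope.

(* Everything is organised around the positive hull P = (0,oo) S, which is
   closed under positive scaling and satisfies  P x <-> x <> 0 /\ S (rho x).
   1. General convexity facts on R^n: for a set closed under positive scaling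
      convexity is closure under addition; adding 0 to such a convex set not
      containing 0 yields a pointed convex cone, and removing 0 from a pointed
      convex cone leaves a convex set; sublevel sets of convex functions and
      the unit box are convex; the convex hull is convex.
   2. Elementary properties of rho for a positive, homogeneous, definite Phi.
   3. For S in the sphere: each assertion (i)-(ix) is related to convexity of
      P, using that rho (a u + b v) only depends on the normalised convex
      combination of u and v, and that (0,1] S = P cap {Phi <= 1}.
   The theorem then follows by chaining: all assertions are equivalent to
   the convexity (iii) of P. *)

(* Let /= unfold membership in the scalar ranges (0,oo), [0,oo), (0,1]. *)
Arguments Pset {R} /.
Arguments Rplus {R} /.
Arguments I01 {R} /.

Section ConvexSets.
Variables (R : realType) (n : nat).
Implicit Types (A C K : set 'rV[R]_n).

Definition pos_scaled A : Prop := forall x (t : R), A x -> 0 < t -> A (t *: x).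

Lemma scale_comb (a b : R) (u v : 'rV[R]_n) : 0 < a + b ->
  (a + b) *: ((a / (a + b)) *: u + (1 - a / (a + b)) *: v) = a *: u + b *: v.
Proof.
move=> ab0; rewrite scalerDr !scalerA; congr (_ *: _ + _ *: _); field.
all: by rewrite gt_eqF.
Qed.

Lemma comb_weight01 (a b : R) : 0 <= a -> 0 <= b -> 0 < a + b ->
  0 <= a / (a + b) <= 1.
Proof. by move=> a0 b0 ab0; rewrite divr_ge0 ?ler_pdivrMr ?mul1r //=; lra. Qed.

Lemma pos_scaled_cvxP A : pos_scaled A ->
  cvx_set A <-> (forall x y, A x -> A y -> A (x + y)).
Proof.
move=> Ascale; split=> [Acvx x y Ax Ay | Aadd x y l Ax Ay /andP[l0 l1]].
  have two0 : 0 < 1 + 1 :> R by rewrite addr_gt0.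
  rewrite -[x]scale1r -[y]scale1r -scale_comb //.
  by apply: Ascale => //; apply: Acvx => //; apply: comb_weight01.
have [->|ln0] := eqVneq l 0; first by rewrite scale0r add0r subr0 scale1r.
have [->|ln1] := eqVneq l 1; first by rewrite scale1r subrr scale0r addr0.
by apply: Aadd; apply: Ascale; rewrite // ?subr_gt0 lt_def ?ln0 // eq_sym ln1.
Qed.

Lemma Pset_scaled A : pos_scaled (scaleset Pset A).
Proof.
move=> _ t [g [/= g0 [a [Aa ->]]]] t0.
by exists (t * g); split; [exact: mulr_gt0|exists a; rewrite scalerA].
Qed.

Lemma Rplus_setE A : A !=set0 -> scaleset Rplus A = [set 0] `|` scaleset Pset A.
Proof.
move=> [a0 Aa0]; apply/seteqP; split.
  move=> _ [g [/= g0 [a [Aa ->]]]].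
  have [->|gn0] := eqVneq g 0; first by left; rewrite scale0r.
  by right; exists g; split; [rewrite /= lt_def gn0|exists a].
move=> _ [->|[g [/= g0 [a [Aa ->]]]]].
  by exists 0; split=> //=; exists a0; rewrite scale0r.
by exists g; split; [exact: ltW|exists a].
Qed.

Lemma pointed_cone_add0 A : pos_scaled A -> cvx_set A -> ~ A 0 ->
  pointed_convex_cone ([set 0] `|` A).
Proof.
move=> Ascale Acvx nA0; have Aadd := (pos_scaled_cvxP Ascale).1 Acvx.
split.
- move=> x t [->|Ax] t0; first by left; rewrite scaler0.
  by have [->|tn0] := eqVneq t 0; [left; rewrite scale0r|right; apply: Ascale;
    rewrite // lt_def tn0].
- move=> x y l [->|Ax] [->|Ay] /andP[l0 l1]; rewrite ?scaler0 ?add0r ?addr0.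
  + by left.
  + by have [->|?] := eqVneq l 1; [left; rewrite subrr scale0r|right;
      apply: Ascale; rewrite // subr_gt0 lt_neqAle; apply/andP].
  + by have [->|?] := eqVneq l 0; [left; rewrite scale0r|right;
      apply: Ascale; rewrite // lt_def; apply/andP].
  + by right; apply: Acvx => //; apply/andP.
- move=> x; split=> [[[//|Ax] [/eqP|Anx]]|->]; last by split; left; rewrite ?oppr0.
  + by rewrite oppr_eq0 => /eqP.
  + by have := Aadd _ _ Ax Anx; rewrite subrr.
Qed.

Lemma pointed_cone_sub0_cvx K : pointed_convex_cone K -> cvx_set (K `\ 0).
Proof.
move=> [Kcone Kcvx Kpt] x y l [Kx xn0] [Ky yn0] hl.
split; first exact: Kcvx.
case/andP: hl => l0 l1.
have {}xn0 : x != 0 by apply/eqP.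
move=> /= /eqP; rewrite addr_eq0 => /eqP lxE.
have [l00|ln0] := eqVneq l 0.
  move: lxE; rewrite l00 subr0 scale1r scale0r => /eqP.
  by rewrite eq_sym oppr_eq0 => /eqP.
have /(Kpt _).1 : K (l *: x) /\ K (- (l *: x)).
  by split; [|rewrite lxE opprK]; apply: Kcone; rewrite ?subr_ge0.
by move/eqP; rewrite scaler_eq0 (negbTE ln0) (negbTE xn0).
Qed.

Lemma cvxI A C : cvx_set A -> cvx_set C -> cvx_set (A `&` C).
Proof. by move=> Acvx Ccvx x y l [Ax Cx] [Ay Cy] hl; split; [apply: Acvx|apply: Ccvx]. Qed.

Lemma cvx_fun_sublevel (f : 'rV[R]_n -> R) (c : R) :
  cvx_fun f -> cvx_set [set x | f x <= c].
Proof.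
move=> fcvx x y l /= fx fy hl; apply: le_trans (fcvx x y l hl) _.
by case/andP: hl => l0 l1; nra.
Qed.

Definition unit_box : set 'rV[R]_n := [set x | forall i, `|x ord0 i| <= 1].

Lemma unit_box_cvx : cvx_set unit_box.
Proof.
move=> x y l Bx By /andP[l0 l1] i; rewrite !mxE.
move: (Bx i) (By i); rewrite !ler_norml => /andP[? ?] /andP[? ?].
by apply/andP; split; nra.
Qed.

Lemma unit_box_bnd : bnd_set unit_box.
Proof.
exists (Num.sqrt n%:R) => x Bx; rewrite /enorm ler_sqrt ?ler0n //.
apply: (@le_trans _ _ (\sum_(i < n) (1 : R))); last by rewrite sumr_const card_ord.
by apply: ler_sum => i _; move: (Bx i); rewrite ler_norml => /andP[? ?]; nra.
Qed.

Lemma unit_box_ray (x : 'rV[R]_n) : exists2 t : R, 0 < t & unit_box (t *: x).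
Proof.
pose d := 1 + \sum_(i < n) `|x ord0 i|.
have d0 : 0 < d by rewrite ltr_pwDl // sumr_ge0.
exists d^-1; rewrite ?invr_gt0 // => i.
rewrite mxE normrM ger0_norm ?invr_ge0 ?(ltW d0) // mulrC ler_pdivrMr // mul1r.
rewrite /d (bigD1 i) //=.
have : 0 <= \sum_(j < n | j != i) `|x ord0 j| by apply: sumr_ge0.
lra.
Qed.

Lemma cvx_hull_cvx A : cvx_set (cvx_hull A).
Proof. by move=> x y l hx hy hl D Dcvx AD; apply: Dcvx (hx D Dcvx AD) (hy D Dcvx AD) hl. Qed.

Lemma sub_cvx_hull A : A `<=` cvx_hull A.
Proof. by move=> x Ax C _; apply. Qed.

End ConvexSets.

Arguments unit_box {R n}.

Section Radial.
Variables (R : realType) (n : nat) (Phi : 'rV[R]_n -> R).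
Hypothesis Phi_ge0 : forall x, 0 <= Phi x.
Hypothesis PhiZ : forall x (t : R), 0 <= t -> Phi (t *: x) = t * Phi x.
Hypothesis Phi_eq0 : forall x, Phi x = 0 <-> x = 0.

Lemma Phi_gt0 x : x != 0 -> 0 < Phi x.
Proof. by move=> xn0; rewrite lt_def Phi_ge0 andbT; apply: contra xn0 => /eqP/Phi_eq0->. Qed.

Lemma sphere_neq0 x : Phi x = 1 -> x != 0.
Proof. by move=> Phix; apply/eqP => /Phi_eq0; rewrite Phix => /eqP; rewrite oner_eq0. Qed.

Lemma rho0 : rho Phi 0 = 0.
Proof. by rewrite /rho eqxx. Qed.

Lemma rho_decomp x : x = Phi x *: rho Phi x.
Proof.
rewrite /rho; case: eqP => [->|/eqP xn0]; first by rewrite scaler0.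
by rewrite scalerA divff ?scale1r // gt_eqF // Phi_gt0.
Qed.

Lemma Phi_rho x : x != 0 -> Phi (rho Phi x) = 1.
Proof. by move=> xn0; rewrite /rho (negbTE xn0) PhiZ ?invr_ge0 // mulVf // gt_eqF ?Phi_gt0. Qed.

Lemma Phi_scale_sphere s (t : R) : Phi s = 1 -> 0 <= t -> Phi (t *: s) = t.
Proof. by move=> Phis t0; rewrite PhiZ // Phis mulr1. Qed.

Lemma rhoZ s (t : R) : Phi s = 1 -> 0 < t -> rho Phi (t *: s) = s.
Proof.
move=> Phis t0; rewrite /rho scaler_eq0 (negbTE (sphere_neq0 Phis)) gt_eqF //=.
by rewrite (Phi_scale_sphere Phis (ltW t0)) scalerA mulVf ?gt_eqF // scale1r.
Qed.

Section OnTheSphere.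
Variable S : set 'rV[R]_n.
Hypothesis S_sph : S `<=` Sph Phi.

Local Notation P := (scaleset Pset S).

Lemma S_neq0 x : S x -> x != 0.
Proof. by move=> /S_sph; apply: sphere_neq0. Qed.

Lemma PsetP x : P x <-> x != 0 /\ S (rho Phi x).
Proof.
split=> [[g [/= g0 [s [Ss ->]]]]|[xn0 Srx]].
  by rewrite scaler_eq0 negb_or gt_eqF ?S_neq0 // (rhoZ (S_sph Ss) g0).
by exists (Phi x); split; [exact: Phi_gt0|exists (rho Phi x); split=> //; apply: rho_decomp].
Qed.

Lemma sub_Pset : S `<=` P.
Proof. by move=> s Ss; exists 1; split=> //=; exists s; rewrite scale1r. Qed.

Lemma Pset_notin0 : ~ P 0.
Proof. by move=> /PsetP[/eqP]. Qed.

Lemma Pset_comb (a b : R) (u v : 'rV[R]_n) : 0 < a -> 0 < b ->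
  S (rho Phi ((a / (a + b)) *: u + (1 - a / (a + b)) *: v)) -> P (a *: u + b *: v).
Proof.
move=> a0 b0 Sw; rewrite -scale_comb; last by lra.
apply: Pset_scaled; last by lra.
apply/PsetP; split=> //; apply/eqP => w0.
by move: Sw; rewrite w0 rho0 => /S_neq0; rewrite eqxx.
Qed.

Lemma s_convex_Pset_add : s_convex Phi S -> forall x y, P x -> P y -> P (x + y).
Proof.
case=> _ Sconv _ _ [a [/= a0 [u [Su ->]]]] [b [/= b0 [v [Sv ->]]]].
by apply: Pset_comb => //; apply: Sconv => //; apply: comb_weight01; lra.
Qed.

Lemma Pset_cvx_s_convex : S !=set0 -> cvx_set P -> s_convex Phi S.
Proof.
move=> S0 Pcvx; split=> // x y l Sx Sy hl.
exact: ((PsetP _).1 (Pcvx _ _ _ (sub_Pset Sx) (sub_Pset Sy) hl)).2.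
Qed.

Lemma Pset_cvx_Rplus_cone : S !=set0 -> cvx_set P -> pointed_convex_cone (scaleset Rplus S).
Proof.
move=> S0 Pcvx; rewrite Rplus_setE //.
exact: pointed_cone_add0 (@Pset_scaled _ _ S) Pcvx Pset_notin0.
Qed.

Lemma Rplus_set_sphere : S = scaleset Rplus S `&` Sph Phi.
Proof.
apply/seteqP; split=> [s Ss|_ [[g [/= g0 [s [Ss ->]]]]]].
  by split; [exists 1; split=> //=; exists s; rewrite scale1r|exact: S_sph].
by rewrite /Sph /= (Phi_scale_sphere (S_sph Ss) g0) => ->; rewrite scale1r.
Qed.

Lemma Pset_cone_trace K : is_cone_set K -> S = K `&` Sph Phi -> P = K `\ 0.
Proof.
move=> Kcone SK; apply/seteqP; split=> x.
  move=> /PsetP[/eqP xn0]; rewrite SK => -[Krx _]; split=> //.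
  by rewrite (rho_decomp x); apply: Kcone.
move=> [Kx /eqP xn0]; apply/PsetP; split; rewrite // SK; split; last exact: Phi_rho.
by rewrite /rho (negbTE xn0); apply: Kcone; rewrite // invr_ge0.
Qed.

Lemma cone_trace_Pset_cvx : (exists K, pointed_convex_cone K /\ S = K `&` Sph Phi) ->
  cvx_set P.
Proof.
move=> [K [Kpcc SK]]; have [Kcone _ _] := Kpcc.
by rewrite (Pset_cone_trace Kcone SK); apply: pointed_cone_sub0_cvx.
Qed.

Lemma rho_image_Pset_cvx C : cvx_set C -> S = rho Phi @` C -> cvx_set P.
Proof.
move=> Ccvx SC; apply/(pos_scaled_cvxP (@Pset_scaled _ _ S)).
have on_C x : P x -> exists t c, [/\ 0 < t, C c & x = t *: c].
  move=> [g [/= g0 [s [Ss ->]]]]; move: (Ss); rewrite {1}SC => -[c Cc cE].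
  have cn0 : c != 0.
    by apply/eqP => c0; move: Ss; rewrite -cE c0 rho0 => /S_neq0; rewrite eqxx.
  exists (g / Phi c), c; split; rewrite ?divr_gt0 ?Phi_gt0 //.
  by rewrite -cE /rho (negbTE cn0) scalerA.
move=> _ _ /on_C[a [u [a0 Cu ->]]] /on_C[b [v [b0 Cv ->]]].
apply: Pset_comb => //; rewrite SC; eexists; last by [].
by apply: Ccvx => //; apply: comb_weight01; lra.
Qed.

Lemma rho_image_sub_Pset C : C `<=` P -> (forall s, S s -> exists2 c, C c & rho Phi c = s) ->
  S = rho Phi @` C.
Proof.
move=> CP Scov; apply/seteqP; split=> [s /Scov[c Cc <-]|_ [c /CP /PsetP[_ Sc] <-]] //.
Qed.

Lemma Pset_cvx_bounded_rep : cvx_set P ->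
  exists C, [/\ cvx_set C, bnd_set C & S = rho Phi @` C].
Proof.
move=> Pcvx; exists (P `&` unit_box); split.
- by apply: cvxI => //; apply: unit_box_cvx.
- by have [M BM] := @unit_box_bnd R n; exists M => x [_ /BM].
- apply: rho_image_sub_Pset => [x []//|s Ss].
  have [t t0 Bts] := unit_box_ray s; exists (t *: s); last by rewrite (rhoZ (S_sph Ss) t0).
  by split=> //; apply: Pset_scaled => //; apply: sub_Pset.
Qed.

Lemma Pset_cvx_hull_rep : cvx_set P -> S = rho Phi @` cvx_hull S.
Proof.
move=> Pcvx; apply: rho_image_sub_Pset => [x hx|s Ss]; first exact: hx sub_Pset.
by exists s; [apply: sub_cvx_hull|rewrite -{1}[s]scale1r (rhoZ (S_sph Ss) ltr01)].
Qed.

Lemma I01_setE : scaleset I01 S = P `&` [set x | Phi x <= 1].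
Proof.
apply/seteqP; split=> [_ [g [/= /andP[g0 g1] [s [Ss ->]]]]|_ [[g [/= g0 [s [Ss ->]]]]]].
  split; first by exists g; split=> //; exists s.
  by rewrite /= (Phi_scale_sphere (S_sph Ss) (ltW g0)).
rewrite /= (Phi_scale_sphere (S_sph Ss) (ltW g0)) // => g1.
by exists g; split; [apply/andP|exists s].
Qed.

Lemma Pset_cvx_I01_set_cvx : cvx_fun Phi -> cvx_set P -> cvx_set (scaleset I01 S).
Proof. by move=> Phicvx Pcvx; rewrite I01_setE; apply: cvxI => //; apply: cvx_fun_sublevel. Qed.

Lemma I01_set_cvx_s_convex : S !=set0 -> cvx_set (scaleset I01 S) -> s_convex Phi S.
Proof.
rewrite I01_setE => S0 Qcvx; split=> // x y l Sx Sy hl.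
have Q z : S z -> (P `&` [set x | Phi x <= 1]) z.
  by move=> Sz; split; [exact: sub_Pset|rewrite /= (S_sph Sz)].
exact: ((PsetP _).1 (Qcvx _ _ _ (Q _ Sx) (Q _ Sy) hl).1).2.
Qed.

End OnTheSphere.
End Radial.

Theorem proposition1 (R : realType) (n : nat) (Phi : 'rV[R]_n -> R)
  (S : set 'rV[R]_n) :
  (2 <= n)%N -> gauge_like Phi ->
  S !=set0 -> S `<=` Sph Phi ->
  let i := s_convex Phi S in
  let ii := forall x1 x2, scaleset Pset S x1 -> scaleset Pset S x2 ->
              scaleset Pset S (x1 + x2) in
  let iii := cvx_set (scaleset Pset S) in
  let iv := pointed_convex_cone (scaleset Rplus S) in
  let v := exists K, pointed_convex_cone K /\ S = K `&` Sph Phi in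
  let vi := exists C, cvx_set C /\ S = rho Phi @` C in
  let vii := exists C, [/\ cvx_set C, bnd_set C & S = rho Phi @` C] in
  let viii := S = rho Phi @` cvx_hull S in
  let ix := cvx_set (scaleset I01 S) in
  (i <-> ii) /\ (i <-> iii) /\ (i <-> iv) /\ (i <-> v) /\ (i <-> vi) /\
  (i <-> vii) /\ (i <-> viii) /\ (cvx_fun Phi -> (i <-> ix)).
Proof.
move=> _ [_ Phi_ge0 PhiZ Phi_eq0] S0 S_sph i ii iii iv v vi vii viii ix.
have iii_ii : iii <-> ii := pos_scaled_cvxP (@Pset_scaled R n S).
have iii_i : iii -> i := Pset_cvx_s_convex Phi_ge0 PhiZ Phi_eq0 S_sph S0.
have i_iii : i -> iii.
  by move=> /(s_convex_Pset_add Phi_ge0 PhiZ Phi_eq0 S_sph)/iii_ii.2.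
have equiv_i (X : Prop) : (X -> iii) -> (iii -> X) -> (i <-> X).
  by move=> X_iii iii_X; split=> [/i_iii/iii_X|/X_iii/iii_i].
have iii_iv : iii -> iv := Pset_cvx_Rplus_cone Phi_ge0 PhiZ Phi_eq0 S_sph S0.
have iv_v : iv -> v by exists (scaleset Rplus S); rewrite -Rplus_set_sphere.
have v_iii : v -> iii := cone_trace_Pset_cvx Phi_ge0 PhiZ Phi_eq0 S_sph.
have vi_iii : vi -> iii.
  by move=> [C [Ccvx SC]]; apply: rho_image_Pset_cvx Ccvx SC.
have iii_vii : iii -> vii := Pset_cvx_bounded_rep Phi_ge0 PhiZ Phi_eq0 S_sph.
have vii_vi : vii -> vi by move=> [C [Ccvx _ SC]]; exists C.
have iii_viii : iii -> viii := Pset_cvx_hull_rep Phi_ge0 PhiZ Phi_eq0 S_sph.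
have viii_vi : viii -> vi by exists (cvx_hull S); split=> //; apply: cvx_hull_cvx.
split; first exact: equiv_i iii_ii.2 iii_ii.1.
split; first exact: equiv_i id id.
split; first by apply: equiv_i iii_iv => /iv_v/v_iii.
split; first by apply: equiv_i v_iii (fun h => iv_v (iii_iv h)).
split; first by apply: equiv_i vi_iii (fun h => vii_vi (iii_vii h)).
split; first by apply: equiv_i iii_vii => /vii_vi/vi_iii.
split; first by apply: equiv_i iii_viii => /viii_vi/vi_iii.
move=> Phicvx; apply: (equiv_i ix); last exact (Pset_cvx_I01_set_cvx PhiZ S_sph Phicvx).
by move=> /(I01_set_cvx_s_convex Phi_ge0 PhiZ Phi_eq0 S_sph S0)/i_iii.
Qed.
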